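(* Consider a cellular network with $n$ base stations $\mathcal{N}=\{1,\dots,n\}$, base station $i$ serving a nonempty set $\mathcal{J}_i$ of users (pairwise disjoint), channel gains $g_{kj}>0$, noise power $\sigma^2>0$, and $$f_i(\mathbf{x};\mathbf{r},\mathbf{p})=\sum_{j\in\mathcal{J}_i}\frac{r_{ij}}{\log\Big(1+\frac{p_i g_{ij}}{\sum_{k\ne i} p_k g_{kj} x_k+\sigma^2}\Big)}.$$ Fix strictly positive $\mathbf{x}$ and $\mathbf{r}$. Then for every $i\in\mathcal{N}$ there exists a function $h_i(\cdot;\mathbf{x},\mathbf{r}):\mathbb{R}^{n-1}_{++}\to\mathbb{R}_{++}$ such that for every $\bar{\mathbf{p}}_i\in\mathbb{R}^{n-1}_{++}$, $p_i=h_i(\bar{\mathbf{p}}_i;\mathbf{x},\mathbf{r})$ is the unique $p_i>0$ with $x_i=f_i(\mathbf{x};\mathbf{r},\mathbf{p})$. In particular, if strictly positive $\mathbf{p},\mathbf{x},\mathbf{r}$ satisfy $\mathbf{x}=\mathbf{f}(\mathbf{x};\mathbf{r},\mathbf{p})$, then $p_i=h_i(\bar{\mathbf{p}}_i;\mathbf{x},\mathbf{r})$ for all $i=1,\dots,n$, i.e., in vector form $\mathbf{p}=\mathbf{h}(\mathbf{p};\mathbf{x},\mathbf{r})$.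
   Context: $\log$ is natural logarithm; $\mathbb{R}_{++}$ denotes positive reals. For a vector $\mathbf{p}\in\mathbb{R}^n$, $\bar{\mathbf{p}}_i\in\mathbb{R}^{n-1}$ is $\mathbf{p}$ with its $i$th component removed (note $f_i$ depends on $\mathbf{p}$ only through $p_i$ and $\bar{\mathbf{p}}_i$). $\mathbf{h}(\mathbf{p};\mathbf{x},\mathbf{r})=(h_1(\bar{\mathbf{p}}_1;\mathbf{x},\mathbf{r}),\dots,h_n(\bar{\mathbf{p}}_n;\mathbf{x},\mathbf{r}))^T$. *)

From HB Require Import structures.
From mathcomp Require Import all_boot all_order all_algebra.
From mathcomp Require Import all_classical all_reals all_analysis.
Set Implicit Arguments. Unset Strict Implicit. Unset Printing Implicit Defensive.
Import Order.TTheory GRing.Theory Num.Theory.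
Local Open Scope ring_scope.

Definition others (n : nat) (i : 'I_n) := {k : 'I_n | k != i}.

Definition bar (R : Type) (n : nat) (i : 'I_n) (p : 'I_n -> R) : others i -> R :=
  fun k => p (val k).

Definition join (R : Type) (n : nat) (i : 'I_n) (pi : R) (pb : others i -> R)
  : 'I_n -> R :=
  fun k => match @insub _ (fun k : 'I_n => k != i) _ k with
           | Some k' => pb k'
           | None => pi
           end.

Definition f (R : realType) (n : nat) (U : finType) (J : 'I_n -> {set U})
  (g : 'I_n -> U -> R) (sigma2 : R) (i : 'I_n)
  (x : 'I_n -> R) (r : 'I_n -> U -> R) (p : 'I_n -> R) : R :=
  \sum_(j in J i)
     r i j / ln (1 + p i * g i j
                     / (\sum_(k < n | k != i) p k * g k j * x k + sigma2)).
Arguments bar {R n} i p _.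

(** For fixed [x], [r] and [bar p_i], the map [p_i |-> f_i(x; r, p)] has the
    form [t |-> \sum_j r_j / ln (1 + t a_j)] with all [a_j, r_j > 0]: each
    summand is continuous and strictly decreasing on [(0, +oo)], blows up at
    [0+] and vanishes at [+oo].  Hence every level [x_i > 0] is reached at
    exactly one [t > 0] (intermediate value theorem plus strict monotonicity),
    and [h_i] picks this root.  A fixed point [x = f(x; r, p)] then forces
    [p_i = h_i(bar p_i)] by uniqueness. *)
From mathcomp Require Import all_boot all_order all_algebra.
From mathcomp Require Import all_classical all_reals all_analysis.
From mathcomp Require Import ring.
Import Order.TTheory GRing.Theory Num.Theory numFieldNormedType.Exports.
Local Open Scope ring_scope.

Lemma continuous_div_ln1DM {R : realType} (c a t : R) : 0 < a -> 0 < t ->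
  {for t, continuous (fun y : R => c / ln (1 + y * a))}.
Proof.
move=> a_gt0 t_gt0.
have ta_gt1 : 1 < 1 + t * a by rewrite ltrDl mulr_gt0.
apply: cvgM; first exact: cvg_cst.
apply: cvgV; first by rewrite gt_eqF // ln_gt0.
have cont_affine : {for t, continuous (fun y : R => 1 + y * a)}.
  by apply: cvgD; [exact: cvg_cst | apply: cvgM; [exact: cvg_id | exact: cvg_cst]].
exact: continuous_comp cont_affine (continuous_ln (lt_trans ltr01 ta_gt1)).
Qed.

Section InvLogSum.
Context {R : realType} {U : finType} {A : {set U}} {a r : U -> R}.
Hypothesis A_neq0 : A != finset.set0.
Hypothesis a_gt0 : {in A, forall j, 0 < a j}.
Hypothesis r_gt0 : {in A, forall j, 0 < r j}.

Definition inv_log_sum (t : R) : R := \sum_(j in A) r j / ln (1 + t * a j).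

Let F := inv_log_sum.

Lemma ln1DM_gt0 t j : 0 < t -> j \in A -> 0 < ln (1 + t * a j).
Proof. by move=> t_gt0 jA; rewrite ln_gt0 // ltrDl mulr_gt0 ?a_gt0. Qed.

Lemma inv_log_sum_decr t s : 0 < t -> t < s -> F s < F t.
Proof.
move=> t_gt0 ts; have s_gt0 := lt_trans t_gt0 ts.
apply: ltr_sum.
  by have /set0Pn[j0 j0A] := A_neq0; apply/hasP; exists j0 => //; exact: mem_index_enum.
move=> j jA.
rewrite ltr_pM2l ?r_gt0 // ltf_pV2 ?posrE ?ln1DM_gt0 //.
rewrite ltr_ln ?posrE ?(lt_trans ltr01) ?ltrDl ?mulr_gt0 ?a_gt0 //.
by rewrite ltrD2l ltr_pM2r ?a_gt0.
Qed.

Lemma inv_log_sum_inj t s : 0 < t -> 0 < s -> F t = F s -> t = s.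
Proof.
move=> t_gt0 s_gt0 Fts; case: (ltgtP t s) => // [ts|st].
- by have := @inv_log_sum_decr t s t_gt0 ts; rewrite Fts ltxx.
- by have := @inv_log_sum_decr s t s_gt0 st; rewrite Fts ltxx.
Qed.

Lemma inv_log_sum_continuous t : 0 < t -> {for t, continuous F}.
Proof.
move=> t_gt0; apply: cvg_big => [|j jA]; first exact: add_continuous.
exact: continuous_div_ln1DM (a_gt0 _ jA) t_gt0.
Qed.

Context {X : R}.
Hypothesis X_gt0 : 0 < X.

(* The summand of [j0] alone equals [X] at [t0 := (expR (r j0 / X) - 1) / a j0]. *)
Lemma inv_log_sum_large : exists2 t0, 0 < t0 & X <= F t0.
Proof.
have /set0Pn[j0 j0A] := A_neq0; have a0 := a_gt0 _ j0A; have r0 := r_gt0 _ j0A.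
exists ((expR (r j0 / X) - 1) / a j0).
  by rewrite divr_gt0 // subr_gt0 expR_gt1 divr_gt0.
rewrite /F /inv_log_sum (bigD1 j0) //= divfK ?gt_eqF // subrKC.
rewrite expRK invf_div mulrCA divff ?gt_eqF // mulr1 lerDl.
apply: sumr_ge0 => j /andP[jA _]; apply: ltW.
by rewrite divr_gt0 ?r_gt0 ?ln1DM_gt0 // divr_gt0 // subr_gt0 expR_gt1 divr_gt0.
Qed.

(* For [t >= b := \sum_j expR (r_j #|A| / X) / a_j] we get
   [ln (1 + t a_j) >= r_j #|A| / X], so every summand is at most [X / #|A|]. *)
Lemma inv_log_sum_small : exists b, forall t, b <= t -> F t <= X.
Proof.
have /set0Pn[j0 j0A] := A_neq0.
set C : R := #|A|%:R.
have C_gt0 : 0 < C by rewrite ltr0n; apply/card_gt0P; exists j0.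
set b := \sum_(j in A) expR (r j * C / X) / a j.
have le_b j : j \in A -> expR (r j * C / X) / a j <= b.
  move=> jA; rewrite /b (bigD1 j) //= lerDl; apply: sumr_ge0 => k /andP[kA _].
  by rewrite ltW // divr_gt0 ?expR_gt0 ?a_gt0.
exists b.
move=> t bt; have t_gt0 := lt_le_trans (divr_gt0 (expR_gt0 _) (a_gt0 _ j0A))
                            (le_trans (le_b _ j0A) bt).
apply: (@le_trans _ _ (\sum_(j in A) X / C)); last first.
  by rewrite sumr_const -mulr_natr -/C divfK ?gt_eqF.
apply: ler_sum => j jA; have aj := a_gt0 _ jA; have rj := r_gt0 _ jA.
have ln_ge : r j * C / X <= ln (1 + t * a j).
  rewrite -ler_expR lnK ?posrE ?(lt_trans ltr01) ?ltrDl ?mulr_gt0 //.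
  apply: (@le_trans _ _ (t * a j)); last by rewrite lerDr.
  by rewrite -ler_pdivrMr //; exact: le_trans (le_b _ jA) bt.
rewrite ler_pdivrMr ?ln1DM_gt0 //.
apply: (@le_trans _ _ (X / C * (r j * C / X))); last by rewrite ler_pM2l ?divr_gt0.
rewrite (_ : X / C * (r j * C / X) = r j) //.
by field; rewrite !gt_eqF.
Qed.

Lemma inv_log_sum_surj : exists2 t, 0 < t & F t = X.
Proof.
have [t0 t0_gt0 ge_t0] := inv_log_sum_large.
have [b le_b] := inv_log_sum_small.
set c := Num.max t0 b.
have t0c : t0 <= c by rewrite le_max lexx.
have le_c : F c <= X by apply: le_b; rewrite le_max lexx orbT.
have cont : {within `[t0, c], continuous F}%classic.
  apply: continuous_in_subspaceT => t; rewrite inE /= in_itv /= => /andP[t0t _].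
  exact: inv_log_sum_continuous (lt_le_trans t0_gt0 t0t).
have Fc_le : F c <= F t0 := le_trans le_c ge_t0.
have X_between : Num.min (F t0) (F c) <= X <= Num.max (F t0) (F c).
  by rewrite (min_r Fc_le) (max_l Fc_le) le_c ge_t0.
have [t] := IVT t0c cont X_between.
by rewrite in_itv /= => /andP[t0t _] Ft; exists t => //; exact: lt_le_trans t0t.
Qed.

End InvLogSum.

Arguments inv_log_sum {R U} A a r t.

Lemma join_id {T : Type} {n} (i : 'I_n) (t : T) (pb : others i -> T) : join t pb i = t.
Proof. by rewrite /join insubF // eqxx. Qed.

Lemma join_neq {T : Type} {n} {i k : 'I_n} (t u : T) (pb : others i -> T) :
  k != i -> join t pb k = join u pb k.
Proof. by move=> ki; rewrite /join insubT. Qed.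

Lemma join_gt0 {R : realType} {n} {i k : 'I_n} (t : R) (pb : others i -> R) :
  0 < t -> (forall k, 0 < pb k) -> 0 < join t pb k.
Proof. by move=> t_gt0 pb_gt0; rewrite /join; case: insub. Qed.

Lemma join_bar {T : Type} {n} (i : 'I_n) (p : 'I_n -> T) : join (p i) (bar i p) = p.
Proof. by apply/funext => k; rewrite /join; case: insubP => [k' _ <-|/negPn /eqP ->]. Qed.

Section Network.
Context {R : realType} {n : nat} {U : finType} {J : 'I_n -> {set U}}.
Context {g : 'I_n -> U -> R} {sigma2 : R} {x : 'I_n -> R} {r : 'I_n -> U -> R}.
Hypothesis J_neq0 : forall i, J i != finset.set0.
Hypothesis g_gt0 : forall k j, 0 < g k j.
Hypothesis sigma2_gt0 : 0 < sigma2.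
Hypothesis x_gt0 : forall i, 0 < x i.
Hypothesis r_gt0 : forall i j, j \in J i -> 0 < r i j.

(* The slot [i] of [join 1 pb] is skipped by the sum, so [1] is arbitrary. *)
Definition interference {i : 'I_n} (pb : others i -> R) (j : U) : R :=
  \sum_(k < n | k != i) join 1 pb k * g k j * x k + sigma2.

Definition gain {i : 'I_n} (pb : others i -> R) (j : U) : R :=
  g i j / interference pb j.

Lemma f_join i (pb : others i -> R) t :
  f J g sigma2 i x r (join t pb) = inv_log_sum (J i) (gain pb) (r i) t.
Proof.
have slot_i_irrelevant j : \sum_(k < n | k != i) join t pb k * g k j * x k =
                         \sum_(k < n | k != i) join 1 pb k * g k j * x k.
  by apply: eq_bigr => k ki; rewrite (join_neq t 1 pb ki).
by apply: eq_bigr => j _; rewrite join_id slot_i_irrelevant -mulrA.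
Qed.

Lemma gain_gt0 {i} {pb : others i -> R} j : (forall k, 0 < pb k) -> 0 < gain pb j.
Proof.
move=> pb_gt0; rewrite divr_gt0 // ltr_wpDl //; apply: sumr_ge0 => k _.
by rewrite mulr_ge0 ?ltW // mulr_gt0 // join_gt0.
Qed.

(* [1] is a junk root for non-positive [pb], making the choice of [h] total. *)
Lemma f_join_root i (pb : others i -> R) : exists2 t, 0 < t &
  ((forall k, 0 < pb k) -> x i = f J g sigma2 i x r (join t pb)).
Proof.
have [pb_gt0|] := pselect (forall k, 0 < pb k); last by exists 1.
have [t t_gt0 Ft] := inv_log_sum_surj (J_neq0 i) (fun j _ => gain_gt0 j pb_gt0)
                       (r_gt0 i) (x_gt0 i).
by exists t => // _; rewrite f_join Ft.
Qed.

Lemma f_join_inj {i} {pb : others i -> R} {t s} : (forall k, 0 < pb k) ->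
  0 < t -> 0 < s ->
  f J g sigma2 i x r (join t pb) = f J g sigma2 i x r (join s pb) -> t = s.
Proof.
move=> pb_gt0 t_gt0 s_gt0; rewrite !f_join.
exact: inv_log_sum_inj (J_neq0 i) (fun j _ => gain_gt0 j pb_gt0) (r_gt0 i) _ _ t_gt0 s_gt0.
Qed.

End Network.

Theorem lemma4 (R : realType) (n : nat) (U : finType) (J : 'I_n -> {set U})
  (g : 'I_n -> U -> R) (sigma2 : R) (x : 'I_n -> R) (r : 'I_n -> U -> R) :
  (forall i, J i != finset.set0) ->
  (forall i k, i != k -> [disjoint J i & J k]) ->
  (forall k j, 0 < g k j) ->
  0 < sigma2 ->
  (forall i, 0 < x i) ->
  (forall i j, j \in J i -> 0 < r i j) ->
  exists h : forall i : 'I_n, (others i -> R) -> R,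
    (forall (i : 'I_n) (pb : others i -> R), (forall k, 0 < pb k) ->
       0 < h i pb /\
       (forall pi : R, 0 < pi ->
          (x i = f J g sigma2 i x r (join pi pb) <-> pi = h i pb))) /\
    (forall p : 'I_n -> R, (forall k, 0 < p k) ->
       (forall i, x i = f J g sigma2 i x r p) ->
       forall i, p i = h i (bar i p)).
Proof.
move=> J_neq0 _ g_gt0 sigma2_gt0 x_gt0 r_gt0.
pose root := f_join_root J_neq0 g_gt0 sigma2_gt0 x_gt0 r_gt0.
pose h i pb := s2val (cid2 (root i pb)).
have [h_gt0 h_root] : (forall i pb, 0 < h i pb) /\
    (forall i pb, (forall k, 0 < pb k) -> x i = f J g sigma2 i x r (join (h i pb) pb)).
  by split=> i pb; rewrite /h; case: cid2.
have h_spec i pb : (forall k, 0 < pb k) -> forall pi, 0 < pi ->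
    (x i = f J g sigma2 i x r (join pi pb) <-> pi = h i pb).
  move=> pb_gt0 pi pi_gt0; split=> [fpi|->]; last exact: h_root.
  apply: (f_join_inj J_neq0 g_gt0 sigma2_gt0 x_gt0 r_gt0 pb_gt0 pi_gt0 (h_gt0 i pb)).
  by rewrite -fpi -h_root.
exists h; split=> [i pb pb_gt0 | p p_gt0 p_fix i]; first by split; [exact: h_gt0 | exact: h_spec].
have bar_gt0 k : 0 < bar i p k by exact: p_gt0.
by apply/(h_spec i (bar i p) bar_gt0 _ (p_gt0 i)); rewrite join_bar.
Qed.
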